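(* Let $p$ be a prime with $p\equiv 1\pmod{12}$, and let $a,b$ be positive integers with $p=a^2-12b^2$. Then the equation $z^4+360z^2-48=0$ has a solution $z\in\mathbb{F}_p$ if and only if $a\equiv 1\pmod 3$. *)

From mathcomp Require Import all_boot all_order all_algebra.

From mathcomp Require Import all_boot all_order all_algebra.
From mathcomp Require Import cyclic finfield.
From mathcomp Require Import zify ring.

(* With s = a/b we have s^2 = 12 in F_p, the quartic factors as
   (z^2 - (52 s - 180)) (z^2 - (-52 s - 180)), and 52 t - 180 = t ((t - 2)^3 / 16)^2
   whenever t^2 = 12.  Since -1 is a square mod p, a root exists iff s, i.e. ab, is a
   square mod p.  By quadratic reciprocity (proved with a Gauss sum) every prime
   factor q of b is a square mod p: for odd q because p = a^2 mod q, and for q = 2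
   because then p = 1 mod 8.  A prime factor q of a is a square mod p iff
   p = -3 (2b)^2 is a square mod q, i.e. iff q = 1 mod 3.  Hence ab is a square mod p
   iff a = 1 mod 3. *)

Set Implicit Arguments.
Unset Strict Implicit.
Unset Printing Implicit Defensive.

Import GRing.Theory.
Local Open Scope ring_scope.

Definition is_square {R : pzSemiRingType} (x : R) : Prop := exists y, y ^+ 2 = x.

Lemma is_squareM (R : comPzSemiRingType) (x y : R) :
  is_square x -> is_square y -> is_square (x * y).
Proof. by move=> [u <-] [v <-]; exists (u * v); rewrite exprMn. Qed.

Lemma is_square_mulr_sqr (F : fieldType) (x c : F) :
  c != 0 -> is_square (x * c ^+ 2) <-> is_square x.
Proof.
move=> c0; split=> [[y hy] | [y <-]]; last by exists (y * c); rewrite exprMn.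
by exists (y / c); rewrite expr_div_n hy mulfK // expf_neq0.
Qed.

Section Quartic.
Variable F : fieldType.
Hypothesis two_neq0 : 2%:R != 0 :> F.

Lemma is_square_shift12 (t : F) : t ^+ 2 = 12%:R ->
  is_square (52%:R * t - 180%:R) <-> is_square t.
Proof.
move=> t2; have pow2_neq0 n k : n%:R = 2%:R ^+ k :> F -> n%:R != 0 :> F.
  by move=> ->; rewrite expf_neq0.
have n8 : 8%:R != 0 :> F by apply: (pow2_neq0 _ 3%N); ring.
have n16 : 16%:R != 0 :> F by apply: (pow2_neq0 _ 4%N); ring.
have n256 : 256%:R != 0 :> F by apply: (pow2_neq0 _ 8%N); ring.
have t_neq2 : t - 2%:R != 0.
  apply: contra_neq n8 => /eqP; rewrite subr_eq0 => /eqP t_eq2.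
  have -> : 8%:R = 12%:R - t ^+ 2 :> F by rewrite t_eq2; ring.
  by rewrite t2 subrr.
suff -> : 52%:R * t - 180%:R = t * ((t - 2%:R) ^+ 3 / 16%:R) ^+ 2.
  by apply: is_square_mulr_sqr; rewrite mulf_neq0 ?expf_neq0 ?invr_eq0.
apply/eqP; rewrite -subr_eq0.
have -> : 52%:R * t - 180%:R - t * ((t - 2%:R) ^+ 3 / 16%:R) ^+ 2 =
  - (t ^+ 2 - 12%:R) * (t ^+ 5 - 12%:R * t ^+ 4 + 72%:R * t ^+ 3 - 304%:R * t ^+ 2
                        + 1104%:R * t - 3840%:R) / 256%:R.
  by field; rewrite n16 n256.
by rewrite t2 subrr oppr0 !mul0r.
Qed.

Lemma quartic_factor (s z : F) : s ^+ 2 = 12%:R ->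
  z ^+ 4 + 360%:R * z ^+ 2 - 48%:R =
  (z ^+ 2 - (52%:R * s - 180%:R)) * (z ^+ 2 - (52%:R * (- s) - 180%:R)).
Proof.
move=> s2; apply/eqP; rewrite -subr_eq0.
have -> : z ^+ 4 + 360%:R * z ^+ 2 - 48%:R -
  (z ^+ 2 - (52%:R * s - 180%:R)) * (z ^+ 2 - (52%:R * (- s) - 180%:R)) =
  2704%:R * (s ^+ 2 - 12%:R) by ring.
by rewrite s2 subrr mulr0.
Qed.

Lemma quartic_rootP (s : F) : is_square (-1 : F) -> s ^+ 2 = 12%:R ->
  (exists z : F, z ^+ 4 + 360%:R * z ^+ 2 - 48%:R = 0) <-> is_square s.
Proof.
move=> sqr_opp1 s2; have s2N : (- s) ^+ 2 = 12%:R by rewrite sqrrN.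
split=> [[z] | /(is_square_shift12 s2) [z z2]]; last first.
  by exists z; rewrite (quartic_factor _ s2) z2 subrr mul0r.
rewrite (quartic_factor _ s2) => /eqP; rewrite mulf_eq0 !subr_eq0.
case/orP=> /eqP z2; first by apply/(is_square_shift12 s2); exists z.
have /(is_squareM sqr_opp1) : is_square (- s) by apply/(is_square_shift12 s2N); exists z.
by rewrite mulN1r opprK.
Qed.

End Quartic.

Lemma prim_root_prime (R : idomainType) (q : nat) (w : R) :
  prime q -> w ^+ q = 1 -> w != 1 -> q.-primitive_root w.
Proof.
move=> q_pr wq w1.
have [m prim_w m_dvd_q] := prim_order_exists (prime_gt0 q_pr) wq.
have m_neq1 : m != 1%N.
  by apply: contraNneq w1 => m1; rewrite m1 in prim_w; rewrite -[w]expr1 prim_expr_order.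
by rewrite -(prime_nt_dvdP q_pr m_neq1 m_dvd_q).
Qed.

Section PrimitiveRootsSquares.
Variable F : fieldType.

Lemma prim_root4_sqr (i : F) : 4.-primitive_root i -> i ^+ 2 = -1.
Proof.
move=> prim_i; have /eqP : (i ^+ 2) ^+ 2 = 1 by rewrite -exprM prim_expr_order.
by rewrite sqrf_eq1 -(prim_order_dvd prim_i) => /orP[] /eqP.
Qed.

Lemma prim_root8_sqr2 (w : F) : 8.-primitive_root w -> (w - w ^+ 3) ^+ 2 = 2%:R.
Proof.
move=> prim_w; have w4 : w ^+ 4 = -1.
  rewrite (exprM w 2 2); apply: prim_root4_sqr.
  by rewrite -[4%N]/(8 %/ gcdn 2 8)%N; apply: exp_prim_root.
apply/eqP; rewrite -subr_eq0.
have -> : (w - w ^+ 3) ^+ 2 - 2%:R = (w ^+ 4 + 1) * (w ^+ 2 - 2%:R) by ring.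
by rewrite w4 addNr mul0r.
Qed.

Lemma prim_root3_sqr (w : F) : 3.-primitive_root w -> (2%:R * w + 1) ^+ 2 = - 3%:R.
Proof.
move=> prim_w; have w1 : w != 1 by rewrite -[w]expr1 -(prim_order_dvd prim_w).
have : (w - 1) * (w ^+ 2 + w + 1) == 0.
  have -> : (w - 1) * (w ^+ 2 + w + 1) = w ^+ 3 - 1 by ring.
  by rewrite prim_expr_order ?subrr.
rewrite mulf_eq0 subr_eq0 (negbTE w1) /= => /eqP w_root.
have -> : (2%:R * w + 1) ^+ 2 = 4%:R * (w ^+ 2 + w + 1) - 3%:R by ring.
by rewrite w_root mulr0 sub0r.
Qed.

Lemma sqr_opp3_prim_root3 (x : F) : 2%:R != 0 :> F -> 3%:R != 0 :> F ->
  x ^+ 2 = - 3%:R -> 3.-primitive_root ((x - 1) / 2%:R).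
Proof.
move=> two_neq0 three_neq0 x2; set w := (x - 1) / 2%:R.
have w_root : w ^+ 2 + w + 1 = 0.
  have four_neq0 : 4%:R != 0 :> F.
    by rewrite (_ : 4%:R = 2%:R * 2%:R) ?mulf_neq0 //; ring.
  have -> : w ^+ 2 + w + 1 = (x ^+ 2 + 3%:R) / 4%:R.
    by rewrite /w; field; rewrite four_neq0 two_neq0.
  by rewrite x2 addNr mul0r.
apply: prim_root_prime => //.
  apply/eqP; rewrite -subr_eq0.
  have -> : w ^+ 3 - 1 = (w - 1) * (w ^+ 2 + w + 1) by ring.
  by rewrite w_root mulr0.
apply: contra_neq three_neq0 => w1; rewrite -w_root w1; ring.
Qed.

End PrimitiveRootsSquares.

Section FinField.
Variable F : finFieldType.
Local Notation N := #|F|.-1.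

Lemma card_pred_gt0 : (0 < N)%N.
Proof. by rewrite -ltnS prednK ?finNzRing_gt1 // (ltn_trans _ (finNzRing_gt1 F)). Qed.

Lemma expf_card_pred (x : F) : x != 0 -> x ^+ N = 1.
Proof.
move=> x0; apply: (mulfI x0); rewrite mulr1 -exprS prednK ?expf_card //.
exact: ltn_trans (finNzRing_gt1 F).
Qed.

Lemma finField_prim_root : exists g : F, N.-primitive_root g.
Proof.
have : has N.-primitive_root (enum (predC1 (0 : F))).
  apply: has_prim_root; first exact: card_pred_gt0.
  - apply/allP=> x; rewrite mem_enum => /= x0.
    exact/unity_rootP/expf_card_pred.
  - exact: enum_uniq.
  by rewrite -cardE cardC1.
by case/hasP=> g _ prim_g; exists g.
Qed.

Lemma finField_prim_rootP d :
  (0 < d)%N -> (exists w : F, d.-primitive_root w) <-> (d %| N)%N.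
Proof.
move=> d0; split=> [[w prim_w] | dN].
  have w0 : w != 0 by rewrite (prim_root_eq0 prim_w) -lt0n.
  by rewrite (prim_order_dvd prim_w) expf_card_pred.
have [g prim_g] := finField_prim_root.
by exists (g ^+ (N %/ d)); apply: dvdn_prim_root.
Qed.

Lemma is_square_opp1 : (4 %| N)%N -> is_square (-1 : F).
Proof.
by case/(@finField_prim_rootP 4 isT)=> i /prim_root4_sqr; exists i.
Qed.

Lemma is_square_two : (8 %| N)%N -> is_square (2%:R : F).
Proof.
by case/(@finField_prim_rootP 8 isT)=> w /prim_root8_sqr2; exists (w - w ^+ 3).
Qed.

Definition legendre (x : F) : F := x ^+ N./2.

Lemma legendreM (x y : F) : legendre (x * y) = legendre x * legendre y.
Proof. exact: exprMn. Qed.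

Hypothesis two_neq0 : (2%:R : F) != 0.

Lemma oppr1_neq1 : (-1 : F) != 1.
Proof. by rewrite eq_sym -addr_eq0 -mulr2n. Qed.

Lemma card_pred_double_half : N = (N./2).*2.
Proof.
have := (@expf_card_pred (-1)); rewrite oppr_eq0 oner_neq0 => /(_ isT); rewrite -signr_odd.
case: (boolP (odd N)) => [_ /eqP | even_N _]; first by rewrite expr1 (negbTE oppr1_neq1).
by rewrite -[LHS]odd_double_half (negbTE even_N).
Qed.

Lemma half_card_pred_gt0 : (0 < N./2)%N.
Proof. by have := card_pred_gt0; rewrite {1}card_pred_double_half double_gt0. Qed.

Lemma legendre_sign (x : F) : x != 0 -> legendre x = 1 \/ legendre x = -1.
Proof.
move=> x0; have /eqP : legendre x ^+ 2 = 1.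
  by rewrite -exprM muln2 -card_pred_double_half expf_card_pred.
by rewrite sqrf_eq1 => /orP[] /eqP; [left | right].
Qed.

Lemma legendre_squareP (x : F) : x != 0 -> legendre x = 1 <-> is_square x.
Proof.
move=> x0; split=> [x1 | [y xy]]; last first.
  have y0 : y != 0 by apply: contraNneq x0 => y0; rewrite -xy y0 expr0n.
  by rewrite /legendre -xy -exprM mul2n -card_pred_double_half expf_card_pred.
have [g prim_g] := finField_prim_root.
have [i def_x] := prim_rootP prim_g (expf_card_pred x0).
move: x1 => /eqP; rewrite /legendre def_x -exprM -(prim_order_dvd prim_g).
rewrite {1}card_pred_double_half -muln2 mulnC dvdn_pmul2r ?half_card_pred_gt0 //.
by case/dvdnP=> j ->; exists (g ^+ j); rewrite -exprM mulnC.
Qed.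

Lemma legendre_nonsquare : exists x : F, legendre x = -1.
Proof.
have [g prim_g] := finField_prim_root; exists g.
have g0 : g != 0 by rewrite (prim_root_eq0 prim_g) -lt0n card_pred_gt0.
case: (legendre_sign g0) => // /eqP; rewrite -(prim_order_dvd prim_g) => /(dvdn_leq half_card_pred_gt0).
by have := card_pred_double_half; have := half_card_pred_gt0; lia.
Qed.

Lemma is_square_opp3P : 3%:R != 0 :> F -> is_square (- 3%:R : F) <-> (3 %| N)%N.
Proof.
move=> three_neq0; rewrite -finField_prim_rootP //; split=> [[x] | [w]].
  by move/(sqr_opp3_prim_root3 two_neq0 three_neq0); exists ((x - 1) / 2%:R).
by move/prim_root3_sqr; exists (2%:R * w + 1).
Qed.

End FinField.

Section GaussSum.
Variables (K L : finFieldType) (p : nat).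
Hypotheses (pcharL : p \in [pchar L]) (p_odd : odd p) (two_neq0 : 2%:R != 0 :> K).
Variable E : K -> L.
Hypotheses (E_add : {morph E : x y / x + y >-> x * y}) (E0 : E 0 = 1) (E1 : E 1 != 1).

Lemma two_neq0_pchar : 2%:R != 0 :> L.
Proof.
rewrite -(dvdn_pcharf pcharL) dvdn_prime2 ?(pcharf_prime pcharL) //.
by apply: contraTneq p_odd => ->.
Qed.

Lemma sum_additive_char c : \sum_x E (c * x) = if c == 0 then #|K|%:R else 0.
Proof.
have [-> | c0] := eqVneq; first by under eq_bigr do rewrite mul0r E0; rewrite sumr_const.
have -> : \sum_x E (c * x) = \sum_x E x by symmetry; exact: reindex_inj (mulfI c0).
have /eqP : \sum_x E x = E 1 * \sum_x E x.
  rewrite mulr_sumr (reindex_inj (addIr 1)).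
  by apply: eq_bigr => x _; rewrite E_add mulrC.
rewrite -subr_eq0 -{1}[\sum_x E x]mul1r -mulrBl mulf_eq0 subr_eq0 eq_sym (negbTE E1).
by move/eqP.
Qed.

Definition quad_char (x : K) : L :=
  if x == 0 then 0 else if legendre x == 1 then 1 else -1.

Lemma quad_char0 : quad_char 0 = 0.
Proof. by rewrite /quad_char eqxx. Qed.

Lemma quad_char_sqr x : x != 0 -> quad_char x * quad_char x = 1.
Proof. by rewrite /quad_char => /negbTE ->; case: ifP; rewrite ?mulr1 ?mulrNN ?mulr1. Qed.

Lemma quad_charM x y : quad_char (x * y) = quad_char x * quad_char y.
Proof.
rewrite /quad_char mulf_eq0.
have [_ | x0] := eqVneq x 0; first by rewrite mul0r.
have [_ | y0] := eqVneq y 0; first by rewrite mulr0.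
rewrite /= legendreM; have m1 := negbTE (oppr1_neq1 two_neq0).
case: (legendre_sign two_neq0 x0) => ->; case: (legendre_sign two_neq0 y0) => ->.
all: by rewrite ?mulr1 ?mul1r ?mulrNN ?mulr1 ?eqxx ?m1 ?mulN1r ?mulrN1 ?mulr1 ?opprK.
Qed.

Lemma quad_char1 : quad_char 1 = 1.
Proof. by rewrite /quad_char oner_eq0 /legendre expr1n eqxx. Qed.

Lemma quad_charV x : quad_char x^-1 = quad_char x.
Proof.
have [-> | x0] := eqVneq x 0; first by rewrite invr0.
by rewrite -[LHS]mul1r -(quad_char_sqr x0) -mulrA -quad_charM mulfV // quad_char1 mulr1.
Qed.

Lemma quad_charX_odd x : quad_char x ^+ p = quad_char x.
Proof.
rewrite /quad_char; case: ifP => _; first by rewrite expr0n; case: (p) p_odd.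
by case: ifP => _; rewrite ?expr1n // -signr_odd p_odd.
Qed.

Lemma quad_char_sum : \sum_x quad_char x = 0.
Proof.
have [n n_nonsq] := legendre_nonsquare two_neq0.
have n0 : n != 0.
  apply: contra_eqN n_nonsq => /eqP ->; rewrite /legendre expr0n.
  by rewrite gtn_eqF ?half_card_pred_gt0 // eq_sym oppr_eq0 oner_eq0.
have chi_n : quad_char n = -1.
  by rewrite /quad_char (negbTE n0) n_nonsq (negbTE (oppr1_neq1 two_neq0)).
have /eqP : \sum_x quad_char x = - \sum_x quad_char x.
  rewrite -mulN1r -chi_n mulr_sumr (reindex_inj (mulfI n0)).
  by apply: eq_bigr => x _; rewrite quad_charM.
by rewrite -subr_eq0 opprK -mulr2n -mulr_natr mulf_eq0 (negbTE two_neq0_pchar) orbF => /eqP.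
Qed.

Definition gauss_sum := \sum_x quad_char x * E x.

Lemma gauss_sum_sqr : gauss_sum ^+ 2 = quad_char (-1) * #|K|%:R.
Proof.
rewrite expr2 /gauss_sum mulr_suml.
transitivity (\sum_x \sum_t quad_char t * E ((t + 1) * x)).
  apply: eq_bigr => x _; rewrite mulr_sumr.
  have [-> | x0] := eqVneq x 0.
    rewrite big1 => [|y _]; last by rewrite quad_char0 !mul0r.
    by under eq_bigr do rewrite mulr0 E0 mulr1; rewrite quad_char_sum.
  rewrite (reindex_inj (mulfI x0)) /=; apply: eq_bigr => t _.
  rewrite mulrACA -E_add quad_charM mulrA quad_char_sqr // mul1r.
  by congr (_ * E _); ring.
rewrite exchange_big /=.
under eq_bigr do rewrite -mulr_sumr sum_additive_char.
rewrite (bigD1 (-1)) //= addNr eqxx big1 ?addr0 // => t /negbTE tN1.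
by rewrite addr_eq0 tN1 mulr0.
Qed.

Lemma additive_charXn x n : E x ^+ n = E (x *+ n).
Proof. by elim: n => [|n IHn]; rewrite ?E0 // exprS IHn mulrS E_add. Qed.

Lemma gauss_sum_frobenius : p%:R != 0 :> K -> gauss_sum ^+ p = quad_char p%:R * gauss_sum.
Proof.
move=> pK0; rewrite /gauss_sum -(pFrobenius_autE pcharL) rmorph_sum /=.
under eq_bigr do rewrite rmorphM /= !pFrobenius_autE quad_charX_odd additive_charXn -mulr_natl.
rewrite (reindex_inj (mulfI (invr_neq0 pK0))) /= mulr_sumr.
apply: eq_bigr => y _.
by rewrite mulVKf // quad_charM quad_charV mulrA.
Qed.

Lemma card_exp_half_pred : (p %% 4 = 1)%N -> #|K|%:R != 0 :> L ->
  p%:R != 0 :> K -> (#|K|%:R : L) ^+ p.-1./2 = quad_char p%:R.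
Proof.
move=> p_mod4 cardK0 pK0.
have [k def_p] : exists k, p = (2 * (2 * k)).+1 by exists (p %/ 4)%N; lia.
(* Compare gauss_sum ^+ p from Frobenius with (gauss_sum ^+ 2) ^+ (2 * k) * gauss_sum. *)
have chiN1_sqr : quad_char (-1) ^+ 2 = 1.
  by rewrite expr2 quad_char_sqr // oppr_eq0 oner_eq0.
have gauss0 : gauss_sum != 0.
  apply: contra_neq cardK0 => gauss0.
  by rewrite -[LHS]mul1r -{1}chiN1_sqr expr2 -mulrA -gauss_sum_sqr gauss0 expr0n mulr0.
have -> : p.-1./2 = (2 * k)%N by rewrite def_p /= mul2n doubleK.
apply: (mulIf gauss0); rewrite -gauss_sum_frobenius // def_p exprSr.
by rewrite (exprM gauss_sum) gauss_sum_sqr exprMn (exprM (quad_char _)) chiN1_sqr expr1n mul1r.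
Qed.

End GaussSum.

Lemma natr_eq1_pchar (R : nzRingType) (p n : nat) : p \in [pchar R] -> (0 < n)%N ->
  (n%:R : R) = 1 <-> (p %| n.-1)%N.
Proof.
move=> pcharR n_gt0; rewrite (dvdn_pcharf pcharR) -subn1 natrB // subr_eq0.
by split=> [-> | /eqP].
Qed.

Lemma Fp_two_neq0 (q : nat) : prime q -> odd q -> 2%:R != 0 :> 'F_q.
Proof.
move=> q_pr q_odd; rewrite -(dvdn_pcharf (pchar_Fp q_pr)) dvdn_prime2 //.
by apply: contraTneq q_odd => ->.
Qed.

Lemma Fp_legendre_natrP (p n : nat) : prime p -> odd p -> ~~ (p %| n)%N ->
  legendre (n%:R : 'F_p) = 1 <-> is_square (n%:R : 'F_p).
Proof.
move=> p_pr p_odd p_n; apply: (legendre_squareP (Fp_two_neq0 p_pr p_odd)).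
by rewrite -(dvdn_pcharf (pchar_Fp p_pr)).
Qed.

Lemma pchar_prim_root_exists (p q : nat) : prime p -> prime q -> p != q ->
  exists2 L : finFieldType, p \in [pchar L] & exists w : L, q.-primitive_root w.
Proof.
move=> p_pr q_pr neq_pq.
have pQ0 : p%:R != 0 :> 'F_q by rewrite -(dvdn_pcharf (pchar_Fp q_pr)) dvdn_prime2 // eq_sym.
have qpred_gt0 : (0 < q.-1)%N by rewrite -subn1 subn_gt0 prime_gt1.
have [L pcharL cardL] := pPrimePowerField p_pr qpred_gt0.
exists L => //; apply/(finField_prim_rootP L (prime_gt0 q_pr)).
rewrite cardL -(natr_eq1_pchar (pchar_Fp q_pr)) ?expn_gt0 ?prime_gt0 // natrX.
by have := expf_card_pred pQ0; rewrite card_Fp.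
Qed.

Lemma Fp_prim_root_exprD (q : nat) (R : nzRingType) (w : R) :
  prime q -> q.-primitive_root w -> {morph (fun x : 'F_q => w ^+ x) : x y / x + y >-> x * y}.
Proof.
move=> q_pr prim_w x y /=; rewrite -exprD -[RHS](prim_expr_mod prim_w).
by congr (w ^+ _); rewrite /=; congr (_ %% _)%N; exact: Fp_cast.
Qed.

Lemma Fp_prim_root_expr1 (q : nat) (R : nzRingType) (w : R) :
  prime q -> q.-primitive_root w -> w ^+ (1%R : 'F_q) != 1.
Proof.
move=> q_pr prim_w; rewrite /= (Fp_cast q_pr) modn_small ?prime_gt1 //.
by rewrite -(prim_order_dvd prim_w) dvdn1 gtn_eqF ?prime_gt1.
Qed.

Lemma quadratic_reciprocity (p q : nat) : prime p -> prime q -> p != q -> odd q ->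
  (p %% 4 = 1)%N -> is_square (q%:R : 'F_p) <-> is_square (p%:R : 'F_q).
Proof.
move=> p_pr q_pr neq_pq q_odd p_mod4.
have p_odd : odd p by rewrite (divn_eq p 4) p_mod4 addn1 oddS oddM andbF.
have [p_q q_p] : ~~ (p %| q)%N /\ ~~ (q %| p)%N.
  by rewrite !dvdn_prime2 // [q == p]eq_sym neq_pq.
apply: (iff_trans (iff_sym (Fp_legendre_natrP p_pr p_odd p_q))).
apply: (iff_trans _ (Fp_legendre_natrP q_pr q_odd q_p)).
have pQ0 : p%:R != 0 :> 'F_q by rewrite -(dvdn_pcharf (pchar_Fp q_pr)).
have [L pcharL [w prim_w]] := pchar_prim_root_exists p_pr q_pr neq_pq.
have LK0 : #|'F_q|%:R != 0 :> L by rewrite card_Fp // -(dvdn_pcharf pcharL).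
have := card_exp_half_pred pcharL p_odd (Fp_two_neq0 q_pr q_odd)
  (Fp_prim_root_exprD q_pr prim_w) (expr0 w) (Fp_prim_root_expr1 q_pr prim_w) p_mod4 LK0 pQ0.
rewrite card_Fp // => q_exp_half.
have half_gt0 : (0 < q ^ p.-1./2)%N by rewrite expn_gt0 prime_gt0.
rewrite [in X in X <-> _]/legendre card_Fp // -natrX.
rewrite (natr_eq1_pchar (pchar_Fp p_pr) half_gt0) -(natr_eq1_pchar pcharL half_gt0).
rewrite natrX q_exp_half /quad_char (negbTE pQ0).
case: ifP => [/eqP -> // | /negbT lp1]; split=> [/eqP | lp]; last by rewrite lp eqxx in lp1.
by rewrite eq_sym -addr_eq0 -mulr2n (negbTE (two_neq0_pchar pcharL p_odd)).
Qed.

Lemma dvdn_prime_ind (P : nat -> Prop) (m : nat) : (0 < m)%N -> P 1%N ->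
    (forall q n, prime q -> (q * n %| m)%N -> P n -> P (q * n)%N) ->
  forall n, (n %| m)%N -> P n.
Proof.
move=> m_gt0 P1 IHq; elim/ltn_ind=> n IHn n_dvd_m.
have n_gt0 := dvdn_gt0 m_gt0 n_dvd_m.
have [n_gt1 | n_le1] := ltnP 1 n; last by have -> : n = 1%N by lia.
have pdiv_n := pdiv_prime n_gt1.
rewrite -(divnK (pdiv_dvd n)) mulnC; apply: IHq => //.
  by rewrite mulnC divnK ?pdiv_dvd.
apply: IHn; first by rewrite ltn_Pdiv ?prime_gt1.
exact: dvdn_trans (dvdn_div (pdiv_dvd n)) n_dvd_m.
Qed.

Definition sign_mod3 (R : pzRingType) (n : nat) : R := if (n %% 3 == 1)%N then 1 else -1.

Lemma sign_mod3M (R : pzRingType) m n : ~~ (3 %| m)%N -> ~~ (3 %| n)%N ->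
  sign_mod3 R (m * n) = sign_mod3 R m * sign_mod3 R n.
Proof.
move=> m3 n3; rewrite /sign_mod3 -modnMm.
have : (n %% 3 = 1 \/ n %% 3 = 2)%N by lia.
have : (m %% 3 = 1 \/ m %% 3 = 2)%N by lia.
by case=> ->; case=> ->; rewrite /= ?mul1r ?mulrNN ?mulr1.
Qed.

Section Representation.
Variables (p a b : nat).
Hypotheses (p_pr : prime p) (p_mod12 : (p %% 12 = 1)%N) (b_gt0 : (0 < b)%N)
  (a_sqr : (a ^ 2 = p + 12 * b ^ 2)%N).

Lemma natr_a_sqr (R : pzSemiRingType) : a%:R ^+ 2 = p%:R + 12%:R * b%:R ^+ 2 :> R.
Proof. by rewrite -!natrX -natrM -natrD a_sqr. Qed.

Lemma p_gt12 : (12 < p)%N.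
Proof. by have := prime_gt1 p_pr; lia. Qed.

Lemma odd_p : odd p.
Proof. by rewrite (divn_eq p 12) p_mod12 addn1 oddS oddM andbF. Qed.

Lemma p_mod4 : (p %% 4 = 1)%N.
Proof. by lia. Qed.

Lemma odd_a : odd a.
Proof.
have : odd (a ^ 2) by rewrite a_sqr oddD odd_p oddM.
by rewrite oddX.
Qed.

Lemma p_ndvd_b : ~~ (p %| b)%N.
Proof.
apply/negP => p_b.
have p_a : (p %| a)%N.
  have : (p %| a ^ 2)%N by rewrite a_sqr dvdn_add // dvdn_mull // dvdn_exp.
  by rewrite Euclid_dvdX // andbT.
have : (p ^ 2 %| p)%N.
  have p2_12b2 : (p ^ 2 %| 12 * b ^ 2)%N by rewrite dvdn_mull // dvdn_exp2r.
  by rewrite -(dvdn_addl _ p2_12b2) -a_sqr dvdn_exp2r.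
move/(dvdn_leq (prime_gt0 p_pr)); rewrite leqNgt -[X in (X < _)%N](expn1 p).
by rewrite ltn_exp2l ?prime_gt1.
Qed.

Lemma p_ndvd_a : ~~ (p %| a)%N.
Proof.
apply/negP => p_a; have : (p %| 12 * b ^ 2)%N.
  by rewrite -(@dvdn_addr p) // -a_sqr dvdn_exp.
rewrite Euclid_dvdM // Euclid_dvdX // (negbTE p_ndvd_b) /= orbF.
by move/(dvdn_leq (isT : 0 < 12)%N); rewrite leqNgt p_gt12.
Qed.

Lemma three_ndvd_a : ~~ (3 %| a)%N.
Proof.
apply/negP => three_a; have : (3 %| p)%N.
  by rewrite -(@dvdn_addl (12 * b ^ 2)) ?dvdn_mulr // -a_sqr dvdn_exp.
by rewrite dvdn_prime2 // => /eqP p3; move: p_gt12; rewrite -p3.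
Qed.

Lemma p_mod8 : ~~ odd b -> (p %% 8 = 1)%N.
Proof.
move=> even_b; have [k def_a] : exists k, a = k.*2.+1.
  by exists a./2; rewrite -[LHS]odd_double_half odd_a.
have [c def_b] : exists c, b = c.*2.
  by exists b./2; rewrite -[LHS]odd_double_half (negbTE even_b).
have even_k : ~~ odd (k * k.+1) by rewrite oddM /= andbN.
have [j def_kk] : exists j, k * k.+1 = j.*2.
  by exists (k * k.+1)./2; rewrite -[LHS]odd_double_half (negbTE even_k).
have : (a ^ 2 = 8 * j + 1)%N by rewrite def_a -!mul2n; nia.
by move: a_sqr; rewrite def_b -mul2n; lia.
Qed.

Lemma legendre_prime_dvd_b q : prime q -> (q %| b)%N -> legendre (q%:R : 'F_p) = 1.
Proof.
move=> q_pr q_b; have p_q : ~~ (p %| q)%N.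
  by apply: contra p_ndvd_b => /dvdn_trans; apply.
apply/(Fp_legendre_natrP p_pr odd_p p_q).
have [q2 | q_neq2] := eqVneq q 2%N.
  rewrite q2 in q_b *; apply: is_square_two; rewrite card_Fp //.
  by have := p_mod8; rewrite -dvdn2 => /(_ q_b); lia.
have q_odd : odd q by case: (even_prime q_pr) q_neq2 => // ->.
have neq_pq : p != q by apply: contraNneq p_q => ->.
apply/(quadratic_reciprocity p_pr q_pr neq_pq q_odd p_mod4).
have /eqP b0 : b%:R == 0 :> 'F_q by rewrite -(dvdn_pcharf (pchar_Fp q_pr)).
by exists a%:R; rewrite natr_a_sqr b0 expr0n mulr0 addr0.
Qed.

Lemma prime_dvd_a_facts q : prime q -> (q %| a)%N ->
  [/\ p != q, odd q, q != 3%N & ~~ (q %| b)%N].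
Proof.
move=> q_pr q_a; have neq_pq : p != q by apply: contraNneq p_ndvd_a => ->.
have q_odd : odd q.
  by case: (even_prime q_pr) => // q2; move: q_a; rewrite q2 dvdn2 odd_a.
split=> //; first by apply: contraNneq three_ndvd_a => <-.
apply/negP => q_b; have : (q %| p)%N.
  by rewrite -(@dvdn_addl (12 * b ^ 2)) ?dvdn_mull ?dvdn_exp // -a_sqr dvdn_exp.
by rewrite dvdn_prime2 // eq_sym (negbTE neq_pq).
Qed.

Lemma is_square_Fp_prime_dvd_a q : prime q -> (q %| a)%N ->
  is_square (p%:R : 'F_q) <-> (q %% 3 = 1)%N.
Proof.
move=> q_pr q_a; have [_ q_odd q_neq3 q_ndvd_b] := prime_dvd_a_facts q_pr q_a.
have pcharQ := pchar_Fp q_pr; have two0 := Fp_two_neq0 q_pr q_odd.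
have twob0 : 2%:R * b%:R != 0 :> 'F_q by rewrite mulf_neq0 // -(dvdn_pcharf pcharQ).
have -> : p%:R = - 3%:R * (2%:R * b%:R) ^+ 2 :> 'F_q.
  have /eqP a0 : a%:R == 0 :> 'F_q by rewrite -(dvdn_pcharf pcharQ).
  have := natr_a_sqr 'F_q; rewrite a0 expr0n /= => /eqP; rewrite eq_sym addr_eq0.
  by move=> /eqP ->; ring.
apply: (iff_trans (is_square_mulr_sqr _ twob0)).
have three0 : 3%:R != 0 :> 'F_q by rewrite -(dvdn_pcharf pcharQ) dvdn_prime2 // eq_sym.
apply: (iff_trans (is_square_opp3P two0 three0)).
by rewrite card_Fp //; have := prime_gt1 q_pr; split; lia.
Qed.

Lemma legendre_prime_dvd_a q : prime q -> (q %| a)%N ->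
  legendre (q%:R : 'F_p) = sign_mod3 _ q.
Proof.
move=> q_pr q_a; have [neq_pq q_odd _ _] := prime_dvd_a_facts q_pr q_a.
have p_q : ~~ (p %| q)%N by rewrite dvdn_prime2.
have sqr_q : is_square (q%:R : 'F_p) <-> (q %% 3 = 1)%N.
  apply: (iff_trans (quadratic_reciprocity p_pr q_pr neq_pq q_odd p_mod4)).
  exact: is_square_Fp_prime_dvd_a.
rewrite /sign_mod3; case: ifP => [/eqP | /eqP q_mod3].
  by move/sqr_q/(Fp_legendre_natrP p_pr odd_p p_q).
have q0 : q%:R != 0 :> 'F_p by rewrite -(dvdn_pcharf (pchar_Fp p_pr)).
case: (legendre_sign (Fp_two_neq0 p_pr odd_p) q0) => //.
by move/(Fp_legendre_natrP p_pr odd_p p_q)/sqr_q.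
Qed.

Lemma legendre_dvd_b n : (n %| b)%N -> legendre (n%:R : 'F_p) = 1.
Proof.
move: n; apply: (dvdn_prime_ind (P := fun n => legendre (n%:R : 'F_p) = 1) b_gt0).
  by rewrite /legendre expr1n.
move=> q n q_pr qn_b IHn; rewrite natrM legendreM IHn mulr1 legendre_prime_dvd_b //.
exact: dvdn_trans (dvdn_mulr _ (dvdnn q)) qn_b.
Qed.

Lemma legendre_dvd_a n : (n %| a)%N -> legendre (n%:R : 'F_p) = sign_mod3 _ n.
Proof.
move: n; apply: (dvdn_prime_ind (P := fun n => legendre (n%:R : 'F_p) = sign_mod3 _ n)).
- exact: odd_gt0 odd_a.
- by rewrite /legendre expr1n.
move=> q n q_pr qn_a IHn.
have [q_a n_a] : (q %| a)%N /\ (n %| a)%N.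
  by split; apply: dvdn_trans qn_a; [apply: dvdn_mulr | apply: dvdn_mull].
have ndvd3 m : (m %| a)%N -> ~~ (3 %| m)%N.
  by move=> m_a; apply: contra three_ndvd_a => /dvdn_trans; apply.
by rewrite natrM legendreM IHn legendre_prime_dvd_a // sign_mod3M ?ndvd3.
Qed.

Lemma quartic_root_Fp_iff :
  (exists z : 'F_p, z ^+ 4 + 360%:R * z ^+ 2 - 48%:R = 0) <-> (a %% 3 = 1)%N.
Proof.
have pcharP := pchar_Fp p_pr; have two0 := Fp_two_neq0 p_pr odd_p.
have p_ab : ~~ (p %| a * b)%N by rewrite Euclid_dvdM // negb_or p_ndvd_a p_ndvd_b.
have b0 : b%:R != 0 :> 'F_p by rewrite -(dvdn_pcharf pcharP) p_ndvd_b.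
have s2 : (a%:R / b%:R : 'F_p) ^+ 2 = 12%:R.
  by rewrite expr_div_n natr_a_sqr pchar_Fp_0 // add0r mulfK // expf_neq0.
have sqr_opp1 : is_square (-1 : 'F_p).
  by apply: is_square_opp1; rewrite card_Fp //; have := p_mod4; lia.
apply: (iff_trans (quartic_rootP two0 sqr_opp1 s2)).
have -> : a%:R / b%:R = (a * b)%:R * (b%:R^-1) ^+ 2 :> 'F_p.
  by rewrite natrM expr2 mulrA mulfK.
apply: (iff_trans (is_square_mulr_sqr _ (invr_neq0 b0))).
apply: (iff_trans (iff_sym (Fp_legendre_natrP p_pr odd_p p_ab))).
rewrite natrM legendreM (legendre_dvd_a (dvdnn a)) (legendre_dvd_b (dvdnn b)) mulr1 /sign_mod3.
case: ifP => [/eqP // | /eqP a_mod3]; split=> // /eqP.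
by rewrite eq_sym -addr_eq0 -mulr2n (negbTE two0).
Qed.

End Representation.

Theorem theorem4 (p a b : nat) :
  prime p -> (p %% 12 = 1)%N -> (0 < a)%N -> (0 < b)%N ->
  (p%:Z = a%:Z ^+ 2 - 12 * b%:Z ^+ 2) ->
  (exists z : 'F_p, z ^+ 4 + 360%:R * z ^+ 2 - 48%:R = 0)
  <-> (a %% 3 = 1)%N.
Proof.
move=> p_pr p_mod12 _ b_gt0 a_sqr_int.
have a_sqr : (a ^ 2 = p + 12 * b ^ 2)%N by lia.
exact: (quartic_root_Fp_iff p_pr p_mod12 b_gt0 a_sqr).
Qed.
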